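(* Let $X$ be a Banach space and $A:D(A)\to X$ the infinitesimal generator of a $C_0$-semigroup $T(\cdot)$ on $X$; consider $\dot x=Ax$ with (mild) solutions $\phi(t,x)=T(t)x$, regarded as a system without disturbances. The following are equivalent: (i) $T$ is exponentially stable; (ii) $\{0\}$ is UGAS; (iii) $\{0\}$ is uniformly globally attractive; (iv) $\{0\}$ is uniformly globally weakly attractive; (v) there is a non-coercive Lyapunov function for $\dot x=Ax$ (with respect to $\{0\}$).
   Context: $\mathbb R_+=[0,\infty)$. $T$ is exponentially stable if there are $M,\lambda>0$ with $\|T(t)\|\le Me^{-\lambda t}$ for all $t\ge0$. $\mathcal K$: continuous strictly increasing $\gamma:\mathbb R_+\to\mathbb R_+$ with $\gamma(0)=0$; $\mathcal K_\infty$: unbounded elements of $\mathcal K$; $\mathcal{KL}$: continuous $\beta:\mathbb R_+^2\to\mathbb R_+$ with $\beta(\cdot,t)\in\mathcal K$ for each $t$ and $\beta(r,\cdot)$ strictly decreasing to $0$ for each $r>0$. $\{0\}$ is UGAS if there is $\beta\in\mathcal{KL}$ with $\|T(t)x\|\le\beta(\|x\|,t)$ for all $x\in X,t\ge0$. $\{0\}$ is uniformly globally attractive if for all $r,\varepsilon>0$ there is $\tau$ with $\|T(t)x\|\le\varepsilon$ whenever $\|x\|\le r$, $t\ge\tau$. $\{0\}$ is uniformly globally weakly attractive if for all $\varepsilon,r>0$ there is $\tau$ such that for every $x$ with $\|x\|\le r$ there is $t\le\tau$ with $\|T(t)x\|\le\varepsilon$. A non-coercive Lyapunov function is a continuous $V:X\to\mathbb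 R_+$ with $V(0)=0$, for which there are $\psi_2\in\mathcal K_\infty$, $\alpha\in\mathcal K$ with $0<V(x)\le\psi_2(\|x\|)$ and $\liminf_{t\to0^+}\frac1t(V(T(t)x)-V(x))\le-\alpha(\|x\|)$ for all $x\ne0$. *)

From HB Require Import structures.
From mathcomp Require Import all_boot all_order all_algebra.
From mathcomp Require Import all_classical all_reals all_analysis.
Set Implicit Arguments. Unset Strict Implicit. Unset Printing Implicit Defensive.
Import Order.TTheory GRing.Theory Num.Theory.
Import numFieldNormedType.Exports.
Local Open Scope classical_set_scope.
Local Open Scope ring_scope.

(* A C_0-semigroup (T(t))_{t >= 0} of bounded linear operators on X.
   Only the values T t for t >= 0 are relevant. *)
Definition C0_semigroup (R : realType) (X : completeNormedModType R)
  (T : R -> X -> X) : Prop :=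
  [/\ (forall t, 0 <= t -> linear (T t) /\ continuous (T t)),
      (forall x, T 0 x = x),
      (forall t s x, 0 <= t -> 0 <= s -> T (t + s) x = T t (T s x)) &
      (forall x, T t x @[t --> 0^'+] --> x)].

Definition class_K (R : realType) (g : R -> R) : Prop :=
  [/\ {within `[0, +oo[, continuous g}, g 0 = 0,
      (forall r, 0 <= r -> 0 <= g r) &
      (forall r s, 0 <= r -> r < s -> g r < g s)].

Definition class_Kinf (R : realType) (g : R -> R) : Prop :=
  class_K g /\ (forall M, exists r, 0 <= r /\ M < g r).

Definition class_KL (R : realType) (b : R -> R -> R) : Prop :=
  [/\ {within `[0, +oo[ `*` `[0, +oo[, continuous (fun p : R * R => b p.1 p.2)},
      (forall p q, 0 <= p -> 0 <= q -> 0 <= b p q),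
      (forall t, 0 <= t -> class_K (fun r => b r t)) &
      (forall r, 0 < r ->
         (forall t s, 0 <= t -> t < s -> b r s < b r t) /\ b r t @[t --> +oo] --> 0)].

(* (i) exponential stability:  ||T(t)|| <= M e^{-lambda t}, the operator norm
   bound written out as a bound on ||T(t) x|| / ||x||. *)
Definition exp_stable (R : realType) (X : completeNormedModType R)
  (T : R -> X -> X) : Prop :=
  exists M lam : R, 0 < M /\ 0 < lam /\
    forall t x, 0 <= t -> `|T t x| <= M * expR (- lam * t) * `|x|.

Definition UGAS (R : realType) (X : completeNormedModType R)
  (T : R -> X -> X) : Prop :=
  exists beta, class_KL beta /\
    forall x t, 0 <= t -> `|T t x| <= beta `|x| t.

Definition UGATT (R : realType) (X : completeNormedModType R)
  (T : R -> X -> X) : Prop :=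
  forall r eps : R, 0 < r -> 0 < eps -> exists tau : R, 0 <= tau /\
    forall x t, `|x| <= r -> tau <= t -> `|T t x| <= eps.

Definition UGWATT (R : realType) (X : completeNormedModType R)
  (T : R -> X -> X) : Prop :=
  forall eps r : R, 0 < eps -> 0 < r -> exists tau : R, 0 <= tau /\
    forall x, `|x| <= r -> exists t, 0 <= t /\ t <= tau /\ `|T t x| <= eps.

(* (v) non-coercive Lyapunov function: the Dini-type lower derivative
   liminf_{t -> 0+} (V(T t x) - V x)/t, taken in the extended reals. *)
Definition noncoercive_Lyapunov (R : realType) (X : completeNormedModType R)
  (T : R -> X -> X) (V : X -> R) : Prop :=
  [/\ continuous V, V 0 = 0, (forall x, 0 <= V x) &
   exists psi2 alpha, class_Kinf psi2 /\ class_K alpha /\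
     forall x, x != 0 ->
       [/\ 0 < V x, V x <= psi2 `|x| &
           (limf_einf (fun t : R => ((V (T t x) - V x) / t)%:E) 0^'+
              <= (- alpha `|x|)%:E)%E]].

From HB Require Import structures.
From mathcomp Require Import all_boot all_order all_algebra.
From mathcomp Require Import all_classical all_reals all_analysis.
From mathcomp Require Import ring lra.
Import Order.TTheory GRing.Theory Num.Theory.
Import numFieldNormedType.Exports.
Local Open Scope classical_set_scope.
Local Open Scope ring_scope.

(* The implications (i) -> (ii) -> (iii) -> (iv) are immediate, with the
   KL function beta r t = M e^(-lam t) r.
   (iv) -> (i): weak attractivity and linearity give a time tau such that
   every orbit halves its norm at some time in [0, tau], and the uniform
   boundedness principle bounds ||T(s)|| by some K on [0, tau]; iterating the
   halving yields ||T(t) x|| <= 2 K 2^(-t/tau) ||x||.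
   (i) -> (v): V x = sup_(t >= 0) e^(lam t) ||T(t) x|| lies between ||x|| and
   M ||x||, is M-Lipschitz and decays like V (T(h) x) <= e^(-lam h) V x.
   (v) -> (iv): while an orbit from the r-ball stays outside the eps-ball,
   t |-> V (T(t) x) + alpha(eps) t is nonincreasing; since V >= 0 and
   V x <= psi2(r), this cannot last beyond time (psi2(r) + 1) / alpha(eps). *)

Section real_facts.
Context {R : realType}.

Lemma near_at_right_itv (a : R) (P : R -> Prop) : (\forall t \near a^'+, P t) ->
  exists2 d, 0 < d & forall t, a < t -> t < a + d -> P t.
Proof.
move=> /nbhs_ballP [d d0 Hd]; exists d => // t ta td; apply: Hd => //.
by rewrite /ball /= ltr_distlC; apply/andP; split; lra.
Qed.

Lemma finite_ub (f : nat -> R) N : exists M, forall n, (n <= N)%N -> f n <= M.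
Proof.
elim: N => [|N [M HM]]; first by exists (f 0%N) => n; rewrite leqn0 => /eqP ->.
exists (Num.max M (f N.+1)) => n; rewrite leq_eqVlt => /orP [/eqP ->|].
  by rewrite le_max lexx orbT.
by rewrite ltnS => /HM h; rewrite le_max h.
Qed.

Lemma le0_geometric (a C : R) : (forall n, a <= C / 2 ^+ n) -> a <= 0.
Proof.
move=> H; apply/ler_addgt0Pr => e e0; rewrite add0r.
pose n := Num.truncn (C / e).
apply: (le_trans (H n)); rewrite ler_pdivrMr ?exprn_gt0 // mulrC -ler_pdivrMr //.
apply: (le_trans (ltW (truncnS_gt _))).
by rewrite -natrX ler_nat ltn_expl.
Qed.

Lemma inv_pow2_le_expR (k : nat) tau t : 0 < tau -> t <= k%:R * tau ->
  (2 ^+ k)^-1 <= expR (- (ln 2 / tau) * t) :> R.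
Proof.
move=> tau0 tk.
have -> : (2 ^+ k)^-1 = expR (- (ln 2 / tau) * (k%:R * tau)) :> R.
  have -> : - (ln 2 / tau) * (k%:R * tau) = - (k%:R * ln 2 :> R).
    by field; rewrite gt_eqF.
  by rewrite expRN expRM_natl lnK // posrE ltr0n.
rewrite ler_expR !mulNr lerN2 ler_wpM2l // divr_ge0 ?ltW //.
by rewrite ln_gt0 // ltr1n.
Qed.

Lemma expRN_le_half (u : R) : 0 <= u -> u <= 1 -> expR (- u) <= 1 - u / 2.
Proof.
move=> u0 u1; have := expR_ge1Dx u; have := expR_gt0 u.
rewrite expRN; move: (expR u) => e e0 e1.
rewrite -(@ler_pM2r _ e) // mulVf ?gt_eqF //; nra.
Qed.

Lemma limf_einf_le_near (F : set_system R) {FF : ProperFilter F}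
    (f : R -> R) (c : R) :
  (\forall x \near F, f x <= c) -> (limf_einf (fun x => (f x)%:E) F <= c%:E)%E.
Proof.
move=> Fc; rewrite limf_einfE; apply: ge_ereal_sup => _ [A FA <-].
have [y [Ay fyc]] := filter_ex (filterI FA Fc).
by apply: ge_ereal_inf; exists (f y)%:E => //; exists y.
Qed.

Lemma limf_einf_ge_near (F : set_system R) {FF : Filter F}
    (f : R -> R) (c : R) :
  (\forall x \near F, c <= f x) -> (c%:E <= limf_einf (fun x => (f x)%:E) F)%E.
Proof.
move=> Fc; rewrite limf_einfE.
apply: le_trans (ereal_sup_ubound _); last by exists [set x | c <= f x].
by apply: le_ereal_inf_tmp => _ [x cx <-]; rewrite lee_fin.
Qed.

(* The supremum s of [t in [0, b] | g t <= g 0] belongs to this set by left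
   lower semicontinuity, and s < b would contradict the descent at s. *)
Lemma right_descent_le (g : R -> R) (b : R) : 0 <= b ->
  (forall s, 0 < s -> s <= b -> g t @[t --> s^'-] --> g s) ->
  (forall t, 0 <= t -> t < b -> ~ \forall h \near 0^'+, g t <= g (t + h)) ->
  g b <= g 0.
Proof.
move=> b0 gl gdesc.
pose S := [set t | [/\ 0 <= t, t <= b & g t <= g 0]].
have S0 : S 0 by split.
have hS : has_sup S by split; [exists 0 | exists b => t []].
have s0 : 0 <= sup S by apply: sup_upper_bound.
have sb : sup S <= b by apply: ge_sup; [exists 0 | move=> t []].
have Ss : S (sup S).
  apply: contrapT => nSs.
  have spos : 0 < sup S.
    by rewrite lt_def s0 andbT; apply: contra_notN nSs => /eqP ->.
  have gs : g 0 < g (sup S) by rewrite ltNge; apply: contra_notN nSs; split.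
  apply: (not_near_at_leftP (sup S) (fun t => g 0 < g t)).2; last first.
    exact: cvgr_gt (gl _ spos sb) _ gs.
  move=> e; have [t St st] := sup_adherent (gt0 e) hS.
  have [t0 tb gt] := St; exists t; last by apply/negP; rewrite -leNgt.
  rewrite st lt_neqAle sup_upper_bound // andbT.
  by apply: contra_notN nSs => /eqP <-.
have [_ _ gs] := Ss.
suff -> : b = sup S by [].
apply/eqP; rewrite eq_le sb andbT leNgt; apply/negP => lt.
have d0 : 0 < b - sup S by rewrite subr_gt0.
have [h /andP [h0 hd] ngh] :=
  (not_near_at_rightP 0 _).1 (gdesc _ s0 lt) (PosNum d0).
move: hd ngh; rewrite add0r /= => hd /negP; rewrite -ltNge => ngh.
have : S (sup S + h) by split; lra.
by move/(sup_upper_bound hS); lra.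
Qed.

Lemma cvgy_expRNM (lam : R) : 0 < lam -> expR (- lam * t) @[t --> +oo] --> 0.
Proof.
move=> lam0; have lamy : lam * t @[t --> +oo] --> +oo.
  apply/cvgryPge => A; exists (A / lam); split; first exact: num_real.
  by move=> t /ltW; rewrite ler_pdivrMr // mulrC.
under eq_fun do rewrite mulNr.
exact: cvg_comp lamy (@cvgr_expR R).
Qed.

Lemma class_K_scale (c : R) : 0 < c -> class_K (fun r => c * r).
Proof.
move=> c0; split.
- by apply: continuous_subspaceT => x; apply: cvgM; [exact: cvg_cst | exact: cvg_id].
- by rewrite mulr0.
- by move=> r r0; rewrite mulr_ge0 // ltW.
- by move=> r s _ rs; rewrite ltr_pM2l.
Qed.

Lemma class_Kinf_scale (c : R) : 0 < c -> class_Kinf (fun r => c * r).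
Proof.
move=> c0; split; first exact: class_K_scale.
move=> M; exists ((Num.max M 0 + 1) / c); split.
  by apply: divr_ge0; [rewrite addr_ge0 // le_max lexx orbT | exact: ltW].
rewrite mulrC divfK ?gt_eqF //.
by apply: (le_lt_trans (y := Num.max M 0)); rewrite ?le_max ?lexx ?ltrDl.
Qed.

Lemma class_KL_exp (M lam : R) : 0 < M -> 0 < lam ->
  class_KL (fun r t => M * expR (- lam * t) * r).
Proof.
move=> M0 lam0; split.
- apply: continuous_subspaceT => p; apply: cvgM; last exact: cvg_fst.
  apply: cvgM; first exact: cvg_cst.
  apply: continuous_comp; last exact: continuous_expR.
  by apply: cvgM; [exact: cvg_cst | exact: cvg_snd].
- by move=> r t r0 _; rewrite !mulr_ge0 // ?expR_ge0 // ltW.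
- by move=> t _; apply: class_K_scale; rewrite mulr_gt0 ?expR_gt0.
move=> r r0; split.
  move=> t s _ ts; rewrite ltr_pM2r // ltr_pM2l // ltr_expR !mulNr ltrN2.
  by rewrite ltr_pM2l.
rewrite -(mul0r r) -(mulr0 M).
exact: cvgM (cvgM (cvg_cst M) (cvgy_expRNM lam lam0)) (cvg_cst r).
Qed.

End real_facts.

Lemma linear_unit_ball_bound {R : realType} {V W : normedModType R}
    (f : {linear V -> W}) (M : R) :
  (forall x, `|x| <= 1 -> `|f x| <= M) -> forall x, `|f x| <= M * `|x|.
Proof.
move=> fM x; have [->|x0] := eqVneq x 0; first by rewrite linear0 !normr0 mulr0.
have nx : 0 < `|x| by rewrite normr_gt0.
have := fM (`|x|^-1 *: x); rewrite linearZZ !normrZ normfV normr_id mulVf ?gt_eqF //.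
by move=> /(_ (lexx _)); rewrite -ler_pdivlMl ?invr_gt0 // invrK mulrC.
Qed.

Section C0_semigroup_theory.
Context {R : realType} {X : completeNormedModType R} {T : R -> X -> X}.

Lemma exp_stable_UGAS : exp_stable T -> UGAS T.
Proof.
move=> [M [lam [M0 [lam0 Hexp]]]]; exists (fun r t => M * expR (- lam * t) * r).
by split; [exact: class_KL_exp | move=> x t; exact: Hexp].
Qed.

Lemma UGAS_UGATT : UGAS T -> UGATT T.
Proof.
move=> [beta [[_ _ betaK betaL] Hbeta]] r eps r0 eps0.
have [_ /cvgr_dist_le/(_ eps eps0) [t1 [_ Ht1]]] := betaL r r0.
exists (Num.max 0 (t1 + 1)); split; first by rewrite le_max lexx.
move=> x t xr tt; have t0 : 0 <= t by apply: le_trans tt; rewrite le_max lexx.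
have [_ _ _ beta_inc] := betaK t t0.
apply: le_trans (Hbeta x t t0) _; apply: (@le_trans _ _ (beta r t)).
  by move: xr; rewrite le_eqVlt => /predU1P [-> //|xr]; exact/ltW/beta_inc.
have := Ht1 t; rewrite sub0r normrN => /(_ _)/(le_trans (ler_norm _)); apply.
by apply: lt_le_trans tt; rewrite lt_max ltr_pwDr ?orbT.
Qed.

Lemma UGATT_UGWATT : UGATT T -> UGWATT T.
Proof.
move=> H eps r eps0 r0; have [tau [tau0 Htau]] := H r eps r0 eps0.
by exists tau; split => // x xr; exists tau; split => //; split => //; exact: Htau.
Qed.

Hypothesis HT : C0_semigroup T.

Lemma C0_linear {t} : 0 <= t -> linear (T t).
Proof. by case: HT => H _ _ _ /H []. Qed.

Lemma C0_continuous {t} : 0 <= t -> continuous (T t).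
Proof. by case: HT => H _ _ _ /H []. Qed.

Lemma C0_id x : T 0 x = x.
Proof. by case: HT. Qed.

Lemma C0_add t s x : 0 <= t -> 0 <= s -> T (t + s) x = T t (T s x).
Proof. by case: HT => _ _ H _; apply: H. Qed.

Lemma C0_strongly_continuous x : T t x @[t --> 0^'+] --> x.
Proof. by case: HT. Qed.

Definition C0_lin {t} (t0 : 0 <= t) : {linear X -> X} :=
  HB.pack (T t) (GRing.isLinear.Build _ _ _ _ _ (C0_linear t0)).

Lemma C0_0 t : 0 <= t -> T t 0 = 0.
Proof. by move=> t0; exact (linear0 (C0_lin t0)). Qed.

Lemma C0_Z t a x : 0 <= t -> T t (a *: x) = a *: T t x.
Proof. by move=> t0; exact (linearZZ (C0_lin t0) _ _). Qed.

Lemma C0_D t x y : 0 <= t -> T t (x + y) = T t x + T t y.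
Proof. by move=> t0; exact (linearD (C0_lin t0) _ _). Qed.

Lemma C0_B t x y : 0 <= t -> T t (x - y) = T t x - T t y.
Proof. by move=> t0; exact (linearB (C0_lin t0) _ _). Qed.

Lemma C0_lipschitz {t} : 0 <= t ->
  exists2 c, 0 < c & forall x, `|T t x| <= c * `|x|.
Proof.
by move=> t0; exact: (@linear_lipschitz _ _ _ (C0_lin t0) (C0_continuous t0)).
Qed.

Lemma C0_orbit_bounded_near0 x :
  exists2 d, 0 < d & forall t, 0 <= t -> t < d -> `|T t x| <= `|x| + 1.
Proof.
have /cvgr_dist_lt/(_ 1 ltr01)/near_at_right_itv [d d0 Hd] :=
  C0_strongly_continuous x.
exists d => // t; rewrite le_eqVlt => /predU1P [<- _|t0 td].
  by rewrite C0_id lerDl.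
have := Hd t t0; rewrite add0r => /(_ td) xTt.
rewrite -[T t x](subrK x) (le_trans (ler_normD _ _)) // addrC lerD2l ltW //.
by rewrite -normrN opprB.
Qed.

(* Otherwise there are s_n -> 0^+ with ||T(s_n)|| > n + 1, but strong continuity
   makes the family (T(s_n))_n pointwise bounded, contradicting the uniform
   boundedness principle. *)
Lemma C0_bounded_near0 : exists2 d, 0 < d &
  exists K, forall s x, 0 <= s -> s <= d -> `|T s x| <= K * `|x|.
Proof.
apply: contrapT => unbounded.
have big n : exists p : R * X,
    [/\ 0 <= p.1, p.1 <= n.+1%:R^-1, `|p.2| <= 1 & n.+1%:R < `|T p.1 p.2|].
  apply: contrapT => small; apply: unbounded; exists n.+1%:R^-1.
    by rewrite invr_gt0 ltr0n.
  exists n.+1%:R => s x s0 sn; apply: (linear_unit_ball_bound (C0_lin s0)) => y y1.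
  by rewrite leNgt; apply/negP => lt; apply: small; exists (s, y).
have [p Hp] := choice big.
pose F := range (fun n => T (p n).1).
have /(_ 1) [M HM] : uniform_bounded F.
  apply: Banach_Steinhauss.
    move=> _ [n _ <-]; have [s0 _ _ _] := Hp n; split; last exact: C0_linear.
    move=> r; have [c c0 Hc] := C0_lipschitz s0; exists (c * r) => x xr.
    by apply: le_trans (Hc x) _; rewrite ler_wpM2l // ltW.
  move=> x; have [d d0 Hd] := C0_orbit_bounded_near0 x.
  have [M1 HM1] := finite_ub (fun n => `|T (p n).1 x|) (Num.truncn d^-1).
  exists (Num.max M1 (`|x| + 1)) => _ [n _ <-]; have [s0 s1 _ _] := Hp n.
  case: (leqP n (Num.truncn d^-1)) => hn; first by rewrite le_max HM1.
  rewrite le_max Hd ?orbT //; apply: le_lt_trans s1 _.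
  rewrite -[d]invrK ltf_pV2 ?posrE ?invr_gt0 ?ltr0n //.
  by apply: lt_le_trans (truncnS_gt _) _; rewrite ler_nat; exact: leqW.
have [_ _ x1 lt] := Hp (Num.truncn M).
have /HM/(_ _ x1) : F (T (p (Num.truncn M)).1) by exists (Num.truncn M).
by apply/negP; rewrite -ltNge; apply: lt_trans lt; exact: truncnS_gt.
Qed.

Lemma C0_bounded_on tau : exists2 K, 1 <= K &
  forall s x, 0 <= s -> s <= tau -> `|T s x| <= K * `|x|.
Proof.
have [d d0 [K0 HK0]] := C0_bounded_near0.
pose K := Num.max K0 1.
have K1 : 1 <= K by rewrite le_max lexx orbT.
have HK s x : 0 <= s -> s <= d -> `|T s x| <= K * `|x|.
  move=> s0 sd; apply: le_trans (HK0 s x s0 sd) _.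
  by rewrite ler_wpM2r // le_max lexx.
have HKn n s x : 0 <= s -> s <= n%:R * d -> `|T s x| <= K ^+ n.+1 * `|x|.
  elim: n s x => [|n IH] s x s0 sn.
    by rewrite expr1; apply: HK => //; apply: le_trans sn _; rewrite mul0r ltW.
  have [sd|ds] := lerP s d.
    by apply: le_trans (HK s x s0 sd) _; rewrite ler_wpM2r // ler_eXnr.
  have -> : s = d + (s - d) by rewrite addrC subrK.
  rewrite C0_add; [|exact: ltW|by rewrite subr_ge0 ltW].
  apply: le_trans (HK _ _ (ltW d0) (lexx _)) _.
  rewrite exprS -mulrA ler_wpM2l ?(le_trans ler01) //.
  apply: IH; first by rewrite subr_ge0 ltW.
  by rewrite lerBlDl; move: sn; rewrite -natr1 mulrDl mul1r addrC.
exists (K ^+ (Num.truncn (tau / d)).+2); first exact: exprn_ege1.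
move=> s x s0 st; apply: HKn => //; apply: le_trans st _.
by rewrite -ler_pdivrMr // ltW // truncnS_gt.
Qed.

Lemma UGWATT_halving : UGWATT T -> exists2 tau, 0 < tau &
  forall x, exists t, [/\ 0 <= t, t <= tau & `|T t x| <= 2^-1 * `|x|].
Proof.
move=> H; have h2 : 0 < 2^-1 :> R by rewrite invr_gt0.
have [tau [tau0 Htau]] := H 2^-1 1 h2 ltr01.
exists (tau + 1); first by rewrite ltr_pwDr.
move=> x; have [->|x0] := eqVneq x 0.
  by exists 0; rewrite C0_0 // normr0 mulr0 addr_ge0.
have nx : 0 < `|x| by rewrite normr_gt0.
have [|t [t0 [tt Tt]]] := Htau (`|x|^-1 *: x).
  by rewrite normrZ normfV normr_id mulVf ?gt_eqF.
exists t; split => //; first by rewrite (le_trans tt) ?lerDl.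
move: Tt; rewrite C0_Z // normrZ normfV normr_id -ler_pdivlMl ?invr_gt0 //.
by rewrite invrK mulrC.
Qed.

Section halving.
Variables (tau K : R).
Hypotheses (tau0 : 0 < tau) (K1 : 1 <= K).
Hypothesis halve :
  forall x, exists t, [/\ 0 <= t, t <= tau & `|T t x| <= 2^-1 * `|x|].
Hypothesis HK : forall s x, 0 <= s -> s <= tau -> `|T s x| <= K * `|x|.

(* Halving n times along the orbit reaches a time t_n <= n tau; on
   [t_k, t_(k+1)] the orbit is bounded by K 2^-k ||x||. *)
Lemma halving_orbit_decay x n : exists t, [/\ 0 <= t, t <= n%:R * tau,
  `|T t x| <= `|x| / 2 ^+ n &
  forall s, 0 <= s -> s <= t -> `|T s x| <= 2 * K * expR (- (ln 2 / tau) * s) * `|x|].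
Proof.
elim: n => [|n [t [t0 tn Tt Ht]]].
  exists 0; rewrite mul0r expr0 divr1 C0_id; split => // s s0 s_le0.
  have -> : s = 0 by apply/eqP; rewrite eq_le s_le0 s0.
  by rewrite mulr0 expR0 mulr1 C0_id ler_peMl // mulr_ege1 // ler1n.
have [h [h0 htau Th]] := halve (T t x).
have E2 : `|x| / 2 ^+ n = 2 * (`|x| / 2 ^+ n.+1).
  by rewrite exprS; field; rewrite ?expf_neq0 ?pnatr_eq0.
exists (h + t); split.
- by rewrite addr_ge0.
- by rewrite -natr1 mulrDl mul1r addrC lerD.
- rewrite C0_add // exprS invfM mulrCA; apply: le_trans Th _.
  by rewrite ler_wpM2l.
move=> s s0 sht; have [st|ts] := lerP s t; first exact: Ht.
have -> : s = (s - t) + t by rewrite subrK.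
rewrite C0_add; [|by rewrite subr_ge0 ltW|by []].
apply: le_trans (HK _ _ _ _) _; [by rewrite subr_ge0 ltW | lra | ].
have decay : (2 ^+ n.+1)^-1 <= expR (- (ln 2 / tau) * (s - t + t)).
  apply: inv_pow2_le_expR => //; rewrite subrK -natr1 mulrDl mul1r.
  by apply: le_trans sht _; rewrite addrC lerD.
apply: le_trans (ler_wpM2l (le_trans ler01 K1) Tt) _.
rewrite E2 mulrCA -!mulrA ler_wpM2l // ler_wpM2l ?(le_trans ler01 K1) //.
by rewrite mulrC ler_wpM2r.
Qed.

Lemma halving_exp_stable : exp_stable T.
Proof.
exists (2 * K), (ln 2 / tau); split; first by rewrite mulr_gt0 // (lt_le_trans ltr01).
split; first by rewrite divr_gt0 // ln_gt0 // ltr1n.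
move=> s x s0; apply: contrapT => nbound.
have [Ks Ks1 HKs] := C0_bounded_on s.
(* The halving times may accumulate below s; then ||T(s) x|| <= Ks 2^-n ||x||
   for every n. *)
suff : `|T s x| <= 0.
  rewrite normr_le0 => /eqP Ts0; apply: nbound; rewrite Ts0 normr0.
  by rewrite !mulr_ge0 ?expR_ge0 // (le_trans ler01 K1).
apply: (@le0_geometric _ _ (Ks * `|x|)) => n.
have [t [t0 _ Tt Ht]] := halving_orbit_decay x n.
have ts : t < s by rewrite ltNge; apply/negP => st; apply: nbound; exact: Ht.
have -> : s = (s - t) + t by rewrite subrK.
rewrite C0_add; [|by rewrite subr_ge0 ltW|by []].
apply: le_trans (HKs _ _ _ _) _; [by rewrite subr_ge0 ltW | lra | ].
by rewrite -mulrA ler_wpM2l // (le_trans ler01 Ks1).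
Qed.

End halving.

Lemma UGWATT_exp_stable : UGWATT T -> exp_stable T.
Proof.
move=> /UGWATT_halving [tau tau0 halve].
have [K K1 HK] := C0_bounded_on tau.
exact: halving_exp_stable tau0 K1 halve HK.
Qed.

Section exp_weighted_sup.
Variables (M lam : R).
Hypotheses (M0 : 0 < M) (lam0 : 0 < lam).
Hypothesis Hexp : forall t x, 0 <= t -> `|T t x| <= M * expR (- lam * t) * `|x|.

Definition weighted_orbit x :=
  [set expR (lam * t) * `|T t x| | t in [set t | 0 <= t]].

Definition exp_weighted_sup x := sup (weighted_orbit x).

Local Notation V := exp_weighted_sup.

Lemma weighted_orbit0 x : weighted_orbit x `|x|.
Proof. by exists 0 => //=; rewrite mulr0 expR0 mul1r C0_id. Qed.

Lemma weighted_orbit_ub x : ubound (weighted_orbit x) (M * `|x|).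
Proof.
move=> _ [t /= t0 <-]; apply: le_trans (ler_wpM2l (expR_ge0 _) (Hexp t x t0)) _.
by rewrite mulrA mulrCA -expRD mulNr subrr expR0 mulr1.
Qed.

Lemma has_sup_weighted_orbit x : has_sup (weighted_orbit x).
Proof.
split; first by exists `|x|; exact: weighted_orbit0.
by exists (M * `|x|); exact: weighted_orbit_ub.
Qed.

Lemma exp_weighted_sup_ge x : `|x| <= V x.
Proof. exact: sup_upper_bound (has_sup_weighted_orbit x) _ (weighted_orbit0 x). Qed.

Lemma exp_weighted_sup_le x : V x <= M * `|x|.
Proof.
by apply: ge_sup; [exists `|x|; exact: weighted_orbit0 | exact: weighted_orbit_ub].
Qed.

Lemma exp_weighted_sup_lipschitz x y : V x <= V y + M * `|x - y|.
Proof.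
apply: ge_sup; first by exists `|x|; exact: weighted_orbit0.
move=> _ [t /= t0 <-]; rewrite -[in T t x](subrK y x) C0_D //.
apply: le_trans (ler_wpM2l (expR_ge0 _) (ler_normD _ _)) _.
rewrite mulrDr addrC lerD //.
  by apply: sup_upper_bound (has_sup_weighted_orbit y) _ _; exists t.
by apply: weighted_orbit_ub; exists t.
Qed.

Lemma exp_weighted_sup_continuous : continuous V.
Proof.
move=> x; apply/cvgrPdist_lt => e e0; apply/nbhs_normP.
exists (e / M); first by rewrite /= divr_gt0.
move=> y /= xy; have := exp_weighted_sup_lipschitz x y.
have := exp_weighted_sup_lipschitz y x; rewrite distrC => yx xy'.
have : `|V x - V y| <= M * `|x - y| by rewrite ler_norml; apply/andP; split; lra.
by move/le_lt_trans; apply; rewrite -ltr_pdivlMl // mulrC.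
Qed.

Lemma exp_weighted_sup_decay x h : 0 <= h -> V (T h x) <= expR (- lam * h) * V x.
Proof.
move=> h0; apply: ge_sup; first by exists `|T h x|; exact: weighted_orbit0.
move=> _ [t /= t0 <-]; rewrite -C0_add //.
have -> : expR (lam * t) * `|T (t + h) x| =
    expR (- lam * h) * (expR (lam * (t + h)) * `|T (t + h) x|).
  by rewrite mulrA -expRD mulNr mulrDr addrA addrAC addNr add0r.
rewrite ler_wpM2l ?expR_ge0 //.
apply: sup_upper_bound (has_sup_weighted_orbit x) _ _.
by exists (t + h); rewrite //= addr_ge0.
Qed.

Lemma exp_weighted_sup_dini x :
  (limf_einf (fun t => ((V (T t x) - V x) / t)%:E) 0^'+ <= (- (lam / 2 * `|x|))%:E)%E.
Proof.
apply: limf_einf_le_near; near=> h.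
have h0 : 0 < h by near: h; exact: nbhs_right_gt.
have hlam : lam * h <= 1.
  have hl : h <= lam^-1 by near: h; apply: nbhs_right_le; rewrite invr_gt0.
  by have := ler_wpM2l (ltW lam0) hl; rewrite mulfV ?gt_eqF.
have E := expRN_le_half (lam * h) (mulr_ge0 (ltW lam0) (ltW h0)) hlam.
have D := exp_weighted_sup_decay x h (ltW h0); rewrite mulNr in D.
have G := exp_weighted_sup_ge x.
have EV := ler_wpM2r (le_trans (normr_ge0 _) G) E.
have GV := ler_wpM2l (divr_ge0 (mulr_ge0 (ltW lam0) (ltW h0)) (ler0n _ 2)) G.
rewrite ler_pdivrMr //; lra.
Unshelve. all: by end_near.
Qed.

Lemma exp_weighted_sup_Lyapunov : noncoercive_Lyapunov T V.
Proof.
split.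
- exact: exp_weighted_sup_continuous.
- apply/eqP; rewrite eq_le; apply/andP; split.
    by have := exp_weighted_sup_le 0; rewrite normr0 mulr0.
  by have := exp_weighted_sup_ge 0; rewrite normr0.
- by move=> x; apply: le_trans (exp_weighted_sup_ge x).
exists (fun r => M * r), (fun r => lam / 2 * r); split; first exact: class_Kinf_scale.
split; first by apply: class_K_scale; rewrite divr_gt0.
move=> x x0; split; last exact: exp_weighted_sup_dini.
  by apply: lt_le_trans (exp_weighted_sup_ge x); rewrite normr_gt0.
exact: exp_weighted_sup_le.
Qed.

End exp_weighted_sup.

Lemma exp_stable_Lyapunov : exp_stable T -> exists V, noncoercive_Lyapunov T V.
Proof.
move=> [M [lam [M0 [lam0 Hexp]]]]; exists (exp_weighted_sup lam).
exact: exp_weighted_sup_Lyapunov M0 lam0 Hexp.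
Qed.

Lemma C0_orbit_left_continuous x s : 0 < s -> T t x @[t --> s^'-] --> T s x.
Proof.
move=> s0; have [K K1 HK] := C0_bounded_on s.
have K0 : 0 < K by apply: lt_le_trans K1.
apply/cvgrPdist_lt => e e0.
have /cvgr_dist_lt/(_ (e / K) (divr_gt0 e0 K0))/near_at_right_itv [d d0 Hd] :=
  C0_strongly_continuous x.
near=> t.
have t0 : 0 < t by near: t; exact: nbhs_left_gt.
have ts : t < s by near: t; exact: nbhs_left_lt.
have std : s - t < d by near: t; exact: nbhs_left_ltBl.
have -> : s = t + (s - t) by rewrite addrC subrK.
rewrite C0_add ?subr_ge0 ?(ltW t0) ?(ltW ts) // -C0_B ?(ltW t0) //.
apply: le_lt_trans (HK _ _ (ltW t0) (ltW ts)) _.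
rewrite -ltr_pdivlMl // mulrC distrC; apply: Hd; first by rewrite subr_gt0.
by rewrite add0r.
Unshelve. all: by end_near.
Qed.

Lemma Lyapunov_UGWATT V : noncoercive_Lyapunov T V -> UGWATT T.
Proof.
move=> [Vc _ V_ge0 [psi2 [alpha [[[_ _ psi2_ge0 psi2_inc] _] Halpha]]]].
have [[_ alpha0 _ alpha_inc] HV] := Halpha.
move=> eps r eps0 r0.
pose a := alpha eps.
have a0 : 0 < a by rewrite -alpha0; exact: alpha_inc.
pose tau := (psi2 r + 1) / a.
have tau0 : 0 <= tau by rewrite divr_ge0 ?addr_ge0 ?psi2_ge0 ?ltW.
exists tau; split => // x xr; apply: contrapT => far.
have Tfar t : 0 <= t -> t <= tau -> eps < `|T t x|.
  by move=> t0 tt; rewrite ltNge; apply/negP => near0; apply: far; exists t.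
have x0 : x != 0 by rewrite -normr_gt0 -[x]C0_id (lt_trans eps0) ?Tfar.
pose g t := V (T t x) + a * t.
have : g tau <= g 0.
  apply: right_descent_le => // [s s0 _|t t0 tb gnondecr].
    apply: cvgD; last first.
      by apply: cvg_at_left_filter; apply: cvgM; [exact: cvg_cst | exact: cvg_id].
    exact: cvg_comp _ _ (C0_orbit_left_continuous x s s0) (Vc (T s x)).
  have y0 : T t x != 0 by rewrite -normr_gt0 (lt_trans eps0) // Tfar // ltW.
  have [_ _ dini] := HV _ y0.
  suff : ((- a)%:E <=
      limf_einf (fun h => ((V (T h (T t x)) - V (T t x)) / h)%:E) 0^'+)%E.
    move=> /le_trans/(_ dini); rewrite lee_fin lerN2; apply/negP; rewrite -ltNge.
    exact: alpha_inc (ltW eps0) (Tfar t t0 (ltW tb)).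
  apply: limf_einf_ge_near; near=> h.
  have h0 : 0 < h by near: h; exact: nbhs_right_gt.
  have gth : g t <= g (t + h) by near: h.
  rewrite ler_pdivlMr // -C0_add; [|exact: ltW|by []].
  rewrite [h + t]addrC.
  by move: gth; rewrite /g; lra.
have Vx : V x <= psi2 r.
  have [_ + _] := HV x x0; move/le_trans; apply.
  by move: xr; rewrite le_eqVlt => /predU1P [-> //|xr]; exact/ltW/psi2_inc.
have E : a * tau = psi2 r + 1 by rewrite /tau mulrC divfK ?gt_eqF.
have := V_ge0 (T tau x); rewrite /g C0_id mulr0 addr0 E; lra.
Unshelve. all: by end_near.
Qed.

End C0_semigroup_theory.

Theorem proposition32 (R : realType) (X : completeNormedModType R)
  (T : R -> X -> X) :
  C0_semigroup T ->
  [<-> exp_stable T; UGAS T; UGATT T; UGWATT T;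
       exists V : X -> R, noncoercive_Lyapunov T V].
Proof.
move=> HT; tfae.
- exact: exp_stable_UGAS.
- exact: UGAS_UGATT.
- exact: UGATT_UGWATT.
- by move/(UGWATT_exp_stable HT)/(exp_stable_Lyapunov HT).
- by case=> V /(Lyapunov_UGWATT HT)/(UGWATT_exp_stable HT).
Qed.
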